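(* Let $((A,\cdot),N)$ be a Nijenhuis algebra and $((M,\triangleright,\triangleleft),N_M)$ a Nijenhuis bimodule over it. Then there is a bijection $\mathcal{E}xt^2((A,N),(M,N_M))\cong H^2_{\mathrm{NAlg}}((A,N);(M,N_M))$.
   Context: Over a field of characteristic $0$. Nijenhuis algebra: associative $(A,\cdot)$ with linear $N$, $N(a)N(b)=N(N(a)b+aN(b)-N(ab))$; a homomorphism of Nijenhuis algebras is an algebra morphism commuting with the operators. Nijenhuis bimodule: $A$-bimodule $(M,\triangleright,\triangleleft)$ with linear $N_M$ such that $N(a)\triangleright N_M(u)=N_M(N(a)\triangleright u+a\triangleright N_M(u)-N_M(a\triangleright u))$ and $N_M(u)\triangleleft N(a)=N_M(N_M(u)\triangleleft a+u\triangleleft N(a)-N_M(u\triangleleft a))$. An abelian extension of $((A,\cdot),N)$ by $(M,N_M)$ is a Nijenhuis algebra $((E,\cdot_E),N_E)$ with a short exact sequence $0\to((M,0),N_M)\xrightarrow{i}((E,\cdot_E),N_E)\xrightarrow{p}((A,\cdot),N)\to0$ of Nijenhuis algebra homomorphisms, where $M$ carries the zero multiplication. For any linear section $s$ of $p$, $a\triangleright u=s(a)\cdot_Ei(u)$, $u\triangleleft a=i(u)\cdot_Es(a)$ (identifying $M$ with $i(M)$) is independent of $s$ and, with $N_M$, is a Nijenhuis bimodule structure on $M$ (the induced one). Two abelian extensions $E,E'$ are isomorphic if there is a Nijenhuis algebra isomorphism $\varphi:E\to E'$ with $\varphi\circ i=i'$ and $p'\circ\varphi=p$. $\mathcal{E}xt^2((A,N),(M,N_M))$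 is the set of isomorphism classes of abelian extensions whose induced Nijenhuis bimodule structure is the prescribed $((M,\triangleright,\triangleleft),N_M)$. Cohomology: $C^0_{\mathrm{NAlg}}=0$, $C^1_{\mathrm{NAlg}}=\mathrm{Hom}(A,M)$, $C^n_{\mathrm{NAlg}}((A,N);(M,N_M))=\mathrm{Hom}(A^{\otimes n},M)\oplus\mathrm{Hom}(A^{\otimes n-1},M)$ ($n\ge2$); $\delta_{\mathrm{NAlg}}(f)=(\delta_{\mathrm{Hoch}}f,-\partial^{N,N_M}f)$ on $C^1$, $\delta_{\mathrm{NAlg}}(\chi,F)=(\delta_{\mathrm{Hoch}}\chi,\ d_{N,N_M}F+(-1)^n\partial^{N,N_M}\chi)$ on $C^n$, $n\ge2$. Here $(\delta_{\mathrm{Hoch}}f)(a_1,\dots,a_{n+1})=a_1\triangleright f(a_2,\dots)+\sum_{i=1}^n(-1)^if(\dots,a_ia_{i+1},\dots)+(-1)^{n+1}f(a_1,\dots,a_n)\triangleleft a_{n+1}$; $(d_{N,N_M}F)(a_1,\dots,a_{n+1})=N(a_1)\triangleright F(a_2,\dots,a_{n+1})-(-1)^nF(a_1,\dots,a_n)\triangleleft N(a_{n+1})+\sum_{i=1}^n(-1)^iF(a_1,\dots,a_{i-1},N(a_i)a_{i+1}+a_iN(a_{i+1})-N(a_ia_{i+1}),\dots,a_{n+1})-N_M((\delta_{\mathrm{Hoch}}F)(a_1,\dots,a_{n+1}))$ for $n\ge1$; $\partial^{N,N_M}(f)(a_1,\dots,a_n)=\sum_{S\subseteq\{1..n\}}(-1)^{|S|}N_M^{|S|}(f(b_1,\dots,b_n))$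 with $b_i=a_i$ for $i\in S$, $b_i=N(a_i)$ otherwise. $H^2_{\mathrm{NAlg}}$ = 2-cocycles mod 2-coboundaries. *)

From HB Require Import structures.
From mathcomp Require Import all_boot all_order all_algebra.
Set Implicit Arguments. Unset Strict Implicit. Unset Printing Implicit Defensive.
Import GRing.Theory.
Local Open Scope ring_scope.

Section Nijenhuis.
Variable K : fieldType.

(* bilinear maps  U x V -> W  (= Hom(U (x) V, W)) *)
Definition bilinear_map (U V W : lmodType K) (f : U -> V -> W) : Prop :=
  (forall v, linear (fun u => f u v)) /\ (forall u, linear (f u)).

Definition is_nijenhuis_algebra (A : lmodType K) (mul : A -> A -> A) (N : A -> A) : Prop :=
  [/\ bilinear_map mul, associative mul, linear N &
      (forall a b, mul (N a) (N b) = N (mul (N a) b + mul a (N b) - N (mul a b)))].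

Section Alg.
Variable A : lmodType K.
Variables (mul : A -> A -> A) (N : A -> A).
Variable M : lmodType K.
Variables (lact : A -> M -> M) (ract : M -> A -> M) (NM : M -> M).

Definition is_nijenhuis_bimodule : Prop :=
  [/\ bilinear_map lact, bilinear_map ract & linear NM] /\
  [/\ (forall a b u, lact (mul a b) u = lact a (lact b u)),
      (forall a b u, ract u (mul a b) = ract (ract u a) b),
      (forall a b u, ract (lact a u) b = lact a (ract u b)),
      (forall a u, lact (N a) (NM u)
                  = NM (lact (N a) u + lact a (NM u) - NM (lact a u))) &
      (forall a u, ract (NM u) (N a)
                  = NM (ract (NM u) a + ract u (N a) - NM (ract u a)))].

Record abelian_extension := AbExt {
  ext_E : lmodType K;
  ext_mul : ext_E -> ext_E -> ext_E;
  ext_N : ext_E -> ext_E;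
  ext_i : M -> ext_E;
  ext_p : ext_E -> A;
  ext_nij : is_nijenhuis_algebra ext_mul ext_N;
  (* i : ((M,0),NM) -> ((E,mulE),NE) is a Nijenhuis algebra homomorphism *)
  ext_i_lin : linear ext_i;
  ext_i_mul : forall u v, ext_i (0 : M) = ext_mul (ext_i u) (ext_i v);
  ext_i_N : forall u, ext_i (NM u) = ext_N (ext_i u);
  ext_p_lin : linear ext_p;
  ext_p_mul : forall x y, ext_p (ext_mul x y) = mul (ext_p x) (ext_p y);
  ext_p_N : forall x, ext_p (ext_N x) = N (ext_p x);
  ext_i_inj : injective ext_i;
  ext_p_surj : forall a, exists x, ext_p x = a;
  ext_exact : forall x, ext_p x = 0 <-> exists u, x = ext_i u;
  (* the induced Nijenhuis bimodule structure is the prescribed one *)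
  ext_induced : forall s : A -> ext_E, linear s -> cancel s ext_p ->
    forall a u, ext_mul (s a) (ext_i u) = ext_i (lact a u) /\
                ext_mul (ext_i u) (s a) = ext_i (ract u a)
}.

Definition ext_iso (E E' : abelian_extension) : Prop :=
  exists phi : ext_E E -> ext_E E',
    [/\ linear phi & bijective phi] /\
    [/\ (forall x y, phi (ext_mul x y) = ext_mul (phi x) (phi y)),
        (forall x, phi (ext_N x) = ext_N (phi x)),
        (forall u, phi (ext_i E u) = ext_i E' u) &
        (forall x, ext_p (phi x) = ext_p x)].

Definition hoch1 (f : A -> M) : A -> A -> M :=
  fun a1 a2 => lact a1 (f a2) - f (mul a1 a2) + ract (f a1) a2.

Definition hoch2 (chi : A -> A -> M) : A -> A -> A -> M :=
  fun a1 a2 a3 => lact a1 (chi a2 a3) - chi (mul a1 a2) a3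
                  + chi a1 (mul a2 a3) - ract (chi a1 a2) a3.

(* partial^{N,NM} on Hom(A,M) : sum over S subset {1} *)
Definition partial1 (f : A -> M) : A -> M :=
  fun a => f (N a) - NM (f a).

(* partial^{N,NM} on Hom(A (x) A, M) : sum over S subset {1,2} *)
Definition partial2 (chi : A -> A -> M) : A -> A -> M :=
  fun a1 a2 => chi (N a1) (N a2) - NM (chi a1 (N a2)) - NM (chi (N a1) a2)
               + NM (NM (chi a1 a2)).

Definition dNN1 (F : A -> M) : A -> A -> M :=
  fun a1 a2 => lact (N a1) (F a2) + ract (F a1) (N a2)
               - F (mul (N a1) a2 + mul a1 (N a2) - N (mul a1 a2))
               - NM (hoch1 F a1 a2).

(* 2-cocycles of C^*_NAlg((A,N);(M,NM)) :
   delta_NAlg (chi, F) = (hoch chi, d F + (-1)^2 partial chi) = 0 *)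
Record cocycle2 := Cocycle2 {
  coc_chi : A -> A -> M;
  coc_F : A -> M;
  coc_chi_bilin : bilinear_map coc_chi;
  coc_F_lin : linear coc_F;
  coc_hoch : forall a1 a2 a3, hoch2 coc_chi a1 a2 a3 = 0;
  coc_N : forall a1 a2, dNN1 coc_F a1 a2 + partial2 coc_chi a1 a2 = 0
}.

(* cohomologous 2-cocycles: the difference is
   delta_NAlg f = (hoch f, - partial f) for some f in C^1 = Hom(A,M) *)
Definition cohomologous (c c' : cocycle2) : Prop :=
  exists f : A -> M, [/\ linear f,
    (forall a1 a2, coc_chi c a1 a2 - coc_chi c' a1 a2 = hoch1 f a1 a2) &
    (forall a, coc_F c a - coc_F c' a = - partial1 f a)].

End Alg.
End Nijenhuis.

(* Choose a linear section s of p (Zorn's lemma provides one: the modules may be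
   infinite dimensional).  Every x in E is uniquely s(a) + i(u), and in these
   coordinates
     (a,u) (b,v) = (ab, chi(a,b) + a |> v + u <| b),
     N_E (a,u)   = (N a, F a + N_M u),
   where chi(a,b) and F(a) are the M-parts of s(a) s(b) and N_E (s a).
   Associativity and the Nijenhuis identity of E are exactly the two components
   of delta_NAlg (chi, F) = 0; replacing s by s + i f changes (chi, F) by
   delta_NAlg f; an isomorphism of extensions carries a section to a section with
   the same (chi, F), and conversely equal cocycles give the isomorphism
   s(a) + i(u) |-> s'(a) + i'(u).  Finally every 2-cocycle is realised by the
   formulas above on A x M. *)

From mathcomp Require Import all_boot all_algebra.
From mathcomp Require Import boolp classical_sets.
Set Implicit Arguments. Unset Strict Implicit. Unset Printing Implicit Defensive.
Import GRing.Theory.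
Local Open Scope ring_scope.

Section LinearMaps.
Variables (K : fieldType) (U V : lmodType K) (f : U -> V).
Hypothesis f_lin : linear f.

Lemma lin0 : f 0 = 0.
Proof.
have f00 := f_lin 1 0 0; rewrite scaler0 addr0 scale1r in f00.
by apply: (addIr (f 0)); rewrite add0r -f00.
Qed.

Lemma linD x y : f (x + y) = f x + f y.
Proof. by have := f_lin 1 x y; rewrite !scale1r. Qed.

Lemma linZ k x : f (k *: x) = k *: f x.
Proof. by rewrite -[k *: x]addr0 f_lin lin0 addr0. Qed.

Lemma linN x : f (- x) = - f x.
Proof. by rewrite -scaleN1r linZ scaleN1r. Qed.

Definition linE := (lin0, linD, linN, linZ).

End LinearMaps.

Section BilinearMaps.
Variables (K : fieldType) (U V W : lmodType K) (g : U -> V -> W).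
Hypothesis g_bilin : bilinear_map g.

Lemma bilin0l v : g 0 v = 0. Proof. exact: (lin0 (g_bilin.1 v)). Qed.
Lemma bilinDl x y v : g (x + y) v = g x v + g y v. Proof. exact: (linD (g_bilin.1 v)). Qed.
Lemma bilinNl x v : g (- x) v = - g x v. Proof. exact: (linN (g_bilin.1 v)). Qed.
Lemma bilinZl k x v : g (k *: x) v = k *: g x v. Proof. exact: (linZ (g_bilin.1 v)). Qed.
Lemma bilin0r u : g u 0 = 0. Proof. exact: (lin0 (g_bilin.2 u)). Qed.
Lemma bilinDr u x y : g u (x + y) = g u x + g u y. Proof. exact: (linD (g_bilin.2 u)). Qed.
Lemma bilinNr u x : g u (- x) = - g u x. Proof. exact: (linN (g_bilin.2 u)). Qed.
Lemma bilinZr u k x : g u (k *: x) = k *: g u x. Proof. exact: (linZ (g_bilin.2 u)). Qed.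

Definition bilinE :=
  (bilin0l, bilinDl, bilinNl, bilinZl, bilin0r, bilinDr, bilinNr, bilinZr).

End BilinearMaps.

(* A reflexive decision procedure for identities in an additive group: both
   sides are read as integer combinations of atoms (maximal subterms not built
   from [+], [-] and [0]) and compared coefficientwise. *)
Inductive zterm := ZAtom of nat | ZZero | ZAdd of zterm & zterm | ZOpp of zterm.

Fixpoint zterm_coef t i : int :=
  match t with
  | ZAtom n => (n == i)%:Z
  | ZZero => 0
  | ZAdd t1 t2 => zterm_coef t1 i + zterm_coef t2 i
  | ZOpp t1 => - zterm_coef t1 i
  end.

Fixpoint zterm_bound t : nat :=
  match t with
  | ZAtom n => n.+1
  | ZZero => 0
  | ZAdd t1 t2 => maxn (zterm_bound t1) (zterm_bound t2)
  | ZOpp t1 => zterm_bound t1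
  end.

Section ZtermEval.
Variable V : zmodType.

Fixpoint zterm_eval (env : seq V) t : V :=
  match t with
  | ZAtom n => nth 0 env n
  | ZZero => 0
  | ZAdd t1 t2 => zterm_eval env t1 + zterm_eval env t2
  | ZOpp t1 => - zterm_eval env t1
  end.

Lemma zterm_eval_sum env t n : (zterm_bound t <= n)%N ->
  zterm_eval env t = \sum_(0 <= i < n) nth 0 env i *~ zterm_coef t i.
Proof.
elim: t => [j | | t1 IH1 t2 IH2 | t1 IH1] /= bound_t.
- rewrite (bigD1_seq j) ?mem_index_iota ?iota_uniq //= eqxx mulr1z big1 ?addr0 //.
  by move=> i /negbTE; rewrite eq_sym => ->.
- by rewrite big1 // => i _; rewrite mulr0z.
- move: bound_t; rewrite geq_max => /andP[b1 b2].
  by rewrite IH1 // IH2 // -big_split; apply: eq_bigr => i _; rewrite mulrzDr.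
- by rewrite IH1 // -sumrN; apply: eq_bigr => i _; rewrite mulrNz.
Qed.

Lemma zterm_eval_eq env t1 t2 :
  all (fun i => zterm_coef t1 i == zterm_coef t2 i)
      (iota 0 (maxn (zterm_bound t1) (zterm_bound t2))) ->
  zterm_eval env t1 = zterm_eval env t2.
Proof.
move=> /allP same_coef; set n := maxn (zterm_bound t1) (zterm_bound t2).
rewrite (@zterm_eval_sum env t1 n) ?leq_maxl // (@zterm_eval_sum env t2 n) ?leq_maxr //.
apply: eq_big_seq => i; rewrite mem_index_iota => lt_in.
by rewrite (eqP (same_coef i _)) // mem_iota.
Qed.

End ZtermEval.

Ltac zterm_append env x :=
  match env with
  | nil => constr:(x :: nil)
  | ?h :: ?r => let r' := zterm_append r x in constr:(h :: r')
  end.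

Ltac zterm_index x env :=
  match env with
  | x :: _ => constr:(0%N)
  | _ :: ?r => let n := zterm_index x r in constr:(n.+1)
  end.

Ltac zterm_reify t env :=
  match t with
  | @GRing.add _ ?a ?b =>
      match zterm_reify a env with (?ta, ?env1) =>
      match zterm_reify b env1 with (?tb, ?env2) => constr:((ZAdd ta tb, env2)) end end
  | @GRing.opp _ ?a =>
      match zterm_reify a env with (?ta, ?env1) => constr:((ZOpp ta, env1)) end
  | @GRing.zero _ => constr:((ZZero, env))
  | _ =>
      match goal with
      | _ => let n := zterm_index t env in constr:((ZAtom n, env))
      | _ => let n := eval compute in (size env) in
             let env' := zterm_append env t in constr:((ZAtom n, env'))
      end
  end.

Ltac zmod_eq :=
  match goal with |- @eq ?T ?x ?y =>
    match zterm_reify x (@nil T) with (?tx, ?env1) =>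
    match zterm_reify y env1 with (?ty, ?env) =>
      apply: (@zterm_eval_eq _ env tx ty); vm_compute; reflexivity
    end end
  end.

Lemma subr0_of_eq (V : zmodType) (x y : V) : x = y -> x - y = 0.
Proof. by move->; rewrite subrr. Qed.

(* Closes [x = y] when [x - y] is, up to sign, the difference of the two sides of [h]. *)
Ltac zmod_eq_from h :=
  let h0 := fresh "h0" in
  have h0 := subr0_of_eq h;
  apply: subr0_eq;
  first [ apply: (etrans _ h0); zmod_eq
        | apply: (etrans _ (etrans (congr1 -%R h0) oppr0)); zmod_eq ].

Section LinearSection.
Variables (K : fieldType) (U V : lmodType K) (f : U -> V).
Hypotheses (f_lin : linear f) (f_surj : forall a, exists x, f x = a).
Local Open Scope classical_set_scope.

Definition lin_closed (S : set U) := forall k x y, S x -> S y -> S (k *: x + y).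

Definition ker_transversal (S : set U) :=
  lin_closed S /\ forall x, S x -> f x = 0 -> x = 0.

Lemma maximal_ker_transversal :
  exists S, ker_transversal S /\ forall B, S `<` B -> ~ ker_transversal B.
Proof.
apply: Zorn_bigcup => F F_trans F_chain; split.
- move=> k x y [X FX Xx] [Y FY Yy].
  have [XY|YX] := F_chain X Y FX FY.
  + by exists Y => //; apply: (F_trans Y FY).1 => //; apply: XY.
  + by exists X => //; apply: (F_trans X FX).1 => //; apply: YX.
- by move=> x [X FX Xx]; apply: (F_trans X FX).2.
Qed.

Lemma lin_closed0 S : lin_closed S -> lin_closed (S `|` [set 0]).
Proof.
move=> S_cl k x y [Sx|->] [Sy|->].
- by left; apply: S_cl.
- have S0 : S 0 by have := S_cl (-1) x x Sx Sx; rewrite scaleN1r addNr.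
  by left; rewrite addr0 -[k *: x]addr0; apply: S_cl.
- by left; rewrite scaler0 add0r.
- by right; rewrite scaler0 addr0.
Qed.

Lemma ker_transversal_extend S x0 : ker_transversal S -> S 0 ->
  ~ (exists2 x, S x & f x = f x0) ->
  ker_transversal [set y | exists k, S (y - k *: x0)].
Proof.
move=> [S_cl S_ker] S0 not_hit; split.
- move=> c y1 y2 [k1 S1] [k2 S2]; exists (c * k1 + k2).
  have := S_cl c _ _ S1 S2.
  by rewrite scalerDl -scalerA scalerBr addrACA opprD.
- move=> y [k Sy] fy0.
  have f_y : f (y - k *: x0) = - (k *: f x0).
    by rewrite ?(linE f_lin) fy0 sub0r.
  have [k0 | nz_k] := eqVneq k 0.
    by move: Sy f_y; rewrite k0 !scale0r subr0 oppr0; apply: S_ker.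
  case: not_hit; exists ((- k^-1) *: (y - k *: x0)).
    by rewrite -[_ *: _]addr0; apply: S_cl.
  by rewrite (linZ f_lin) f_y scalerN scaleNr opprK scalerA mulVf // scale1r.
Qed.

Lemma linear_section_exists : exists s : V -> U, linear s /\ cancel s f.
Proof.
have [S [[S_cl S_ker] S_max]] := maximal_ker_transversal.
have S0 : S 0.
  apply: contrapT => notS0; apply: (S_max (S `|` [set 0])).
    split=> [x Sx|]; first by left.
    by move=> /(_ 0) S0; apply: notS0; apply: S0; right.
  split=> [|x [Sx|->] //]; [exact: lin_closed0 | exact: S_ker].
have S_onto a : exists x, S x /\ f x = a.
  apply: contrapT => not_hit; have [x0 fx0] := f_surj a.
  have x0_notin : ~ S x0 by move=> Sx0; apply: not_hit; exists x0.
  apply: (S_max [set y | exists k, S (y - k *: x0)]).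
    split=> [y Sy|]; first by exists 0; rewrite scale0r subr0.
    by move/(_ x0); apply/not_implyP; split=> //; exists 1; rewrite scale1r addrN.
  apply: (@ker_transversal_extend S x0) => // -[x Sx]; rewrite fx0 => fx.
  by apply: not_hit; exists x.
pose s a := sval (cid (S_onto a)).
have S_s a : S (s a) by exact: (svalP (cid (S_onto a))).1.
have s_can : cancel s f by move=> a; exact: (svalP (cid (S_onto a))).2.
exists s; split => // k a b; apply/eqP; rewrite -subr_eq0; apply/eqP; apply: S_ker.
  have := S_cl (- k) _ _ (S_s a) (S_cl (-1) _ _ (S_s b) (S_s (k *: a + b))).
  by rewrite scaleN1r scaleNr opprD addrA addrC.
by rewrite ?(linE f_lin) !s_can subrr.
Qed.

End LinearSection.

Section NijenhuisExtensions.
Variables (K : fieldType) (A : lmodType K) (mul : A -> A -> A) (N : A -> A).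
Variables (M : lmodType K) (lact : A -> M -> M) (ract : M -> A -> M) (NM : M -> M).
Hypotheses (HA : is_nijenhuis_algebra mul N)
           (HM : is_nijenhuis_bimodule mul N lact ract NM).

Local Notation extension := (abelian_extension mul N lact ract NM).
Local Notation cocycle := (cocycle2 mul N lact ract NM).
Local Notation ext_pr E := (@ext_p _ _ _ _ _ _ _ _ E).
Local Notation ext_pr_lin E := (@ext_p_lin _ _ _ _ _ _ _ _ E).
Local Notation ext_pr_surj E := (@ext_p_surj _ _ _ _ _ _ _ _ E).

Lemma mul_bilin : bilinear_map mul. Proof. by case: HA. Qed.
Lemma mulA : associative mul. Proof. by case: HA. Qed.
Lemma N_lin : linear N. Proof. by case: HA. Qed.
Lemma N_nijenhuis a b : mul (N a) (N b) = N (mul (N a) b + mul a (N b) - N (mul a b)).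
Proof. by case: HA. Qed.

Lemma lact_bilin : bilinear_map lact. Proof. by case: HM => -[]. Qed.
Lemma ract_bilin : bilinear_map ract. Proof. by case: HM => -[]. Qed.
Lemma NM_lin : linear NM. Proof. by case: HM => -[]. Qed.
Lemma lact_mul a b u : lact (mul a b) u = lact a (lact b u).
Proof. by case: HM => _ []. Qed.
Lemma ract_mul a b u : ract u (mul a b) = ract (ract u a) b.
Proof. by case: HM => _ []. Qed.
Lemma lact_ract a b u : ract (lact a u) b = lact a (ract u b).
Proof. by case: HM => _ []. Qed.
Lemma lact_nijenhuis a u :
  lact (N a) (NM u) = NM (lact (N a) u + lact a (NM u) - NM (lact a u)).
Proof. by case: HM => _ []. Qed.
Lemma ract_nijenhuis a u :
  ract (NM u) (N a) = NM (ract (NM u) a + ract u (N a) - NM (ract u a)).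
Proof. by case: HM => _ []. Qed.

Lemma cocycle2_eq (c c' : cocycle) :
  coc_chi c = coc_chi c' -> coc_F c = coc_F c' -> c = c'.
Proof.
case: c c' => chi F ? ? ? ? [chi' F' ? ? ? ?] /= eq_chi eq_F; subst chi' F'.
by f_equal; apply: Prop_irrelevance.
Qed.

Section Splitting.
Variable E : extension.
Local Notation mulE := (@ext_mul _ _ _ _ _ _ _ _ E).
Local Notation NE := (@ext_N _ _ _ _ _ _ _ _ E).
Local Notation iE := (@ext_i _ _ _ _ _ _ _ _ E).
Local Notation pE := (ext_pr E).
Local Notation iE_lin := (@ext_i_lin _ _ _ _ _ _ _ _ E).
Local Notation pE_lin := (ext_pr_lin E).
Local Notation iE_inj := (@ext_i_inj _ _ _ _ _ _ _ _ E).
Local Notation pE_exact := (@ext_exact _ _ _ _ _ _ _ _ E).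

Lemma ext_mul_bilin : bilinear_map mulE. Proof. by case: (ext_nij E). Qed.
Lemma ext_mulA : associative mulE. Proof. by case: (ext_nij E). Qed.
Lemma ext_N_lin : linear NE. Proof. by case: (ext_nij E). Qed.
Lemma ext_N_nijenhuis x y :
  mulE (NE x) (NE y) = NE (mulE (NE x) y + mulE x (NE y) - NE (mulE x y)).
Proof. by case: (ext_nij E). Qed.

Lemma ext_mul_ii u v : mulE (iE u) (iE v) = 0.
Proof. by rewrite -ext_i_mul (lin0 iE_lin). Qed.

Lemma ext_p_i u : pE (iE u) = 0.
Proof. by apply/pE_exact; exists u. Qed.

Variable s : A -> ext_E E.
Hypotheses (s_lin : linear s) (s_can : cancel s pE).

Lemma ext_p_sub_sec x : pE (x - s (pE x)) = 0.
Proof. by rewrite (linD pE_lin) (linN pE_lin) s_can subrr. Qed.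

(* The [M]-coordinate of [x] in the decomposition [E = s(A) + i(M)]. *)
Definition mpart x : M := sval (cid ((pE_exact _).1 (ext_p_sub_sec x))).

Lemma mpartE x : iE (mpart x) = x - s (pE x).
Proof. by rewrite /mpart; case: cid. Qed.

Lemma ext_decomp x : x = s (pE x) + iE (mpart x).
Proof. by rewrite mpartE addrC subrK. Qed.

Lemma ext_p_split a u : pE (s a + iE u) = a.
Proof. by rewrite (linD pE_lin) s_can ext_p_i addr0. Qed.

Lemma mpart_split a u : mpart (s a + iE u) = u.
Proof. by apply: iE_inj; rewrite mpartE ext_p_split addrAC subrr add0r. Qed.

Lemma ext_split_inj x y : pE x = pE y -> mpart x = mpart y -> x = y.
Proof. by move=> eq_p eq_m; rewrite (ext_decomp x) (ext_decomp y) eq_p eq_m. Qed.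

Lemma mpart_lin : linear mpart.
Proof.
move=> k x y; apply: iE_inj.
rewrite ?(linE iE_lin) !mpartE ?(linE pE_lin) ?(linE s_lin) scalerBr.
zmod_eq.
Qed.

Lemma mpart_sec a : mpart (s a) = 0.
Proof. by have := mpart_split a 0; rewrite (lin0 iE_lin) addr0. Qed.

Lemma mpart_i u : mpart (iE u) = u.
Proof. by have := mpart_split 0 u; rewrite (lin0 s_lin) add0r. Qed.

Definition sec_chi a b := mpart (mulE (s a) (s b)).
Definition sec_F a := mpart (NE (s a)).

Lemma ext_mul_si a u : mulE (s a) (iE u) = iE (lact a u).
Proof. exact: (ext_induced s_lin s_can a u).1. Qed.

Lemma ext_mul_is a u : mulE (iE u) (s a) = iE (ract u a).
Proof. exact: (ext_induced s_lin s_can a u).2. Qed.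

Lemma mpart_mul x y :
  mpart (mulE x y) = sec_chi (pE x) (pE y) + lact (pE x) (mpart y) + ract (mpart x) (pE y).
Proof.
rewrite {1}(ext_decomp x) {1}(ext_decomp y) ?(bilinE ext_mul_bilin).
by rewrite ext_mul_si ext_mul_is ext_mul_ii addr0 ?(linE mpart_lin) !mpart_i.
Qed.

Lemma mpart_N x : mpart (NE x) = sec_F (pE x) + NM (mpart x).
Proof. by rewrite {1}(ext_decomp x) (linD ext_N_lin) -ext_i_N (linD mpart_lin) mpart_i. Qed.

Lemma sec_chi_bilin : bilinear_map sec_chi.
Proof.
by split=> [b|a] k x y; rewrite /sec_chi s_lin ?(bilinE ext_mul_bilin) ?(linE mpart_lin).
Qed.

Lemma sec_F_lin : linear sec_F.
Proof. by move=> k x y; rewrite /sec_F s_lin ?(linE ext_N_lin) ?(linE mpart_lin). Qed.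

Let expand_M := (linE NM_lin, linE sec_F_lin, bilinE lact_bilin, bilinE ract_bilin,
  bilinE sec_chi_bilin).
Let expand_E := (mpart_mul, mpart_N, ext_p_mul, ext_p_N, s_can, mpart_sec,
  linE mpart_lin, linE pE_lin).

Lemma sec_chi_hoch a b c : hoch2 mul lact ract sec_chi a b c = 0.
Proof.
have assoc := congr1 mpart (ext_mulA (s a) (s b) (s c)).
rewrite ?expand_E ?expand_M in assoc.
rewrite /hoch2 ?expand_M; zmod_eq_from assoc.
Qed.

Lemma sec_F_cocycle a b :
  dNN1 mul N lact ract NM sec_F a b + partial2 N NM sec_chi a b = 0.
Proof.
have nij := congr1 mpart (ext_N_nijenhuis (s a) (s b)).
rewrite ?expand_E ?expand_M in nij.
rewrite /dNN1 /partial2 /hoch1 ?expand_M; zmod_eq_from nij.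
Qed.

Definition sec_cocycle : cocycle :=
  Cocycle2 sec_chi_bilin sec_F_lin sec_chi_hoch sec_F_cocycle.

End Splitting.

Section ChangeOfSection.
Variable E : extension.
Local Notation pE := (ext_pr E).
Variables s1 s2 : A -> ext_E E.
Hypotheses (s1_lin : linear s1) (s1_can : cancel s1 pE).
Hypotheses (s2_lin : linear s2) (s2_can : cancel s2 pE).

Local Notation g := (fun a => mpart s1_can (s2 a)).

Lemma mpart_change x : mpart s2_can x = mpart s1_can x - g (pE x).
Proof.
have := congr1 (mpart s1_can) (ext_decomp s2_can x).
by rewrite (linD (mpart_lin s1_lin s1_can)) (mpart_i s1_lin) => ->; zmod_eq.
Qed.

Lemma sec_chi_change a b :
  sec_chi s2_can a b = sec_chi s1_can a b + hoch1 mul lact ract g a b.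
Proof.
by rewrite {1}/sec_chi mpart_change (mpart_mul s1_lin) ext_p_mul !s2_can /hoch1; zmod_eq.
Qed.

Lemma sec_F_change a : sec_F s2_can a = sec_F s1_can a - partial1 N NM g a.
Proof.
by rewrite {1}/sec_F mpart_change (mpart_N s1_lin) ext_p_N !s2_can /partial1; zmod_eq.
Qed.

Lemma sec_cocycle_change :
  cohomologous (sec_cocycle s2_lin s2_can) (sec_cocycle s1_lin s1_can).
Proof.
exists g; split=> [k x y | a b | a] /=.
- by rewrite s2_lin (mpart_lin s1_lin).
- by rewrite sec_chi_change; zmod_eq.
- by rewrite sec_F_change; zmod_eq.
Qed.

End ChangeOfSection.

Section ShiftedSection.
Variable E : extension.
Variables (s : A -> ext_E E) (s_lin : linear s) (s_can : cancel s (ext_pr E)).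
Variables (f : A -> M) (f_lin : linear f).

Definition shift_sec a := s a + ext_i E (f a).

Lemma shift_sec_lin : linear shift_sec.
Proof.
move=> k a b; rewrite /shift_sec s_lin f_lin ?(linE (ext_i_lin E)) scalerDr.
by zmod_eq.
Qed.

Lemma shift_sec_can : cancel shift_sec (ext_pr E).
Proof. by move=> a; apply: ext_p_split. Qed.

Lemma mpart_shift_sec a : mpart s_can (shift_sec a) = f a.
Proof. exact: mpart_split. Qed.

Lemma sec_chi_shift a b :
  sec_chi shift_sec_can a b = sec_chi s_can a b + hoch1 mul lact ract f a b.
Proof. by rewrite (sec_chi_change s_lin s_can shift_sec_can) /hoch1 !mpart_shift_sec. Qed.

Lemma sec_F_shift a : sec_F shift_sec_can a = sec_F s_can a - partial1 N NM f a.
Proof. by rewrite (sec_F_change s_lin s_can shift_sec_can) /partial1 !mpart_shift_sec. Qed.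

End ShiftedSection.

Section Isomorphism.
Variables E E' : extension.
Variable phi : ext_E E -> ext_E E'.
Hypotheses (phi_lin : linear phi)
  (phi_mul : forall x y, phi (ext_mul x y) = ext_mul (phi x) (phi y))
  (phi_N : forall x, phi (ext_N x) = ext_N (phi x))
  (phi_i : forall u, phi (ext_i E u) = ext_i E' u)
  (phi_p : forall x, ext_p (phi x) = ext_p x).
Variable s : A -> ext_E E.
Hypotheses (s_lin : linear s) (s_can : cancel s (ext_pr E)).

Lemma iso_sec_lin : linear (phi \o s).
Proof. by move=> k x y /=; rewrite s_lin phi_lin. Qed.

Lemma iso_sec_can : cancel (phi \o s) (ext_pr E').
Proof. by move=> a /=; rewrite phi_p s_can. Qed.

Lemma mpart_iso x : mpart iso_sec_can (phi x) = mpart s_can x.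
Proof.
by rewrite {1}(ext_decomp s_can x) (linD phi_lin) phi_i (mpart_split iso_sec_can).
Qed.

Lemma sec_cocycle_iso :
  sec_cocycle iso_sec_lin iso_sec_can = sec_cocycle s_lin s_can.
Proof.
apply: cocycle2_eq; rewrite /= /sec_chi /sec_F /=.
  by apply/funext => a; apply/funext => b; rewrite -phi_mul mpart_iso.
by apply/funext => a; rewrite -phi_N mpart_iso.
Qed.

End Isomorphism.

Section Transfer.
Variables E E' : extension.
Variables (s : A -> ext_E E) (s_can : cancel s (ext_pr E)).
Variables (s' : A -> ext_E E') (s'_can : cancel s' (ext_pr E')).

Definition transfer x := s' (ext_p x) + ext_i E' (mpart s_can x).

Lemma ext_p_transfer x : ext_p (transfer x) = ext_p x.
Proof. exact: ext_p_split. Qed.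

Lemma mpart_transfer x : mpart s'_can (transfer x) = mpart s_can x.
Proof. exact: mpart_split. Qed.

End Transfer.

Section IsomorphismOfSplittings.
Variables E E' : extension.
Variables (s : A -> ext_E E) (s' : A -> ext_E E').
Hypotheses (s_lin : linear s) (s_can : cancel s (ext_pr E)).
Hypotheses (s'_lin : linear s') (s'_can : cancel s' (ext_pr E')).

Lemma ext_iso_of_sec_cocycle_eq :
  sec_cocycle s_lin s_can = sec_cocycle s'_lin s'_can -> ext_iso E E'.
Proof.
move=> eq_c.
have eq_chi a b : sec_chi s_can a b = sec_chi s'_can a b.
  exact: (congr1 (fun c => coc_chi c a b) eq_c).
have eq_F a : sec_F s_can a = sec_F s'_can a.
  exact: (congr1 (fun c => coc_F c a) eq_c).
have p_tr := ext_p_transfer s_can s'_can; have m_tr := mpart_transfer s_can s'_can.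
have split_inj := ext_split_inj (s_can:=s'_can).
exists (transfer s_can s'); split; [split|split].
- move=> k x y; apply: split_inj.
    by rewrite (ext_pr_lin E') !p_tr (ext_pr_lin E).
  by rewrite (mpart_lin s'_lin) !m_tr (mpart_lin s_lin).
- have p_tr' := ext_p_transfer s'_can s_can; have m_tr' := mpart_transfer s'_can s_can.
  exists (transfer s'_can s) => x; first apply: (ext_split_inj (s_can:=s_can)).
  + by rewrite p_tr' p_tr.
  + by rewrite m_tr' m_tr.
  + by apply: split_inj; rewrite ?p_tr ?p_tr' ?m_tr ?m_tr'.
- move=> x y; apply: split_inj; first by rewrite p_tr !ext_p_mul !p_tr.
  by rewrite m_tr (mpart_mul s'_lin) (mpart_mul s_lin) !p_tr !m_tr eq_chi.
- move=> x; apply: split_inj; first by rewrite p_tr !ext_p_N p_tr.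
  by rewrite m_tr (mpart_N s'_lin) (mpart_N s_lin) p_tr m_tr eq_F.
- move=> u; apply: split_inj; first by rewrite p_tr !ext_p_i.
  by rewrite m_tr !mpart_i.
- exact: p_tr.
Qed.

End IsomorphismOfSplittings.

Section CocycleExtension.
Variable c : cocycle.
Local Notation chi := (coc_chi c).
Local Notation F := (coc_F c).

Definition cext_mul (x y : A * M) : A * M :=
  (mul x.1 y.1, chi x.1 y.1 + lact x.1 y.2 + ract x.2 y.1).
Definition cext_N (x : A * M) : A * M := (N x.1, F x.1 + NM x.2).
Definition cext_i (u : M) : A * M := (0, u).
Definition cext_p (x : A * M) : A := x.1.

Let expand_AM := (linE N_lin, linE NM_lin, linE (coc_F_lin c), bilinE mul_bilin,
  bilinE lact_bilin, bilinE ract_bilin, bilinE (coc_chi_bilin c), scalerDr).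

Lemma cext_mul_bilin : bilinear_map cext_mul.
Proof.
by split=> [[b v]|[a u]] k [x1 x2] [y1 y2]; congr (_, _); rewrite /= ?expand_AM; zmod_eq.
Qed.

Lemma cext_mulA : associative cext_mul.
Proof.
move=> [a u] [b v] [d w]; congr (_, _); first exact: mulA.
have hoch := coc_hoch c a b d; rewrite /hoch2 in hoch.
rewrite /= ?expand_AM !lact_mul !ract_mul !lact_ract.
zmod_eq_from hoch.
Qed.

Lemma cext_N_lin : linear cext_N.
Proof. by move=> k [a u] [b v]; congr (_, _); rewrite /= ?expand_AM; zmod_eq. Qed.

Lemma cext_N_nijenhuis x y :
  cext_mul (cext_N x) (cext_N y) =
  cext_N (cext_mul (cext_N x) y + cext_mul x (cext_N y) - cext_N (cext_mul x y)).
Proof.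
case: x y => [a u] [b v]; congr (_, _); first exact: N_nijenhuis.
have coc := coc_N c a b; rewrite /dNN1 /partial2 /hoch1 ?expand_AM in coc.
rewrite /= ?expand_AM lact_nijenhuis ract_nijenhuis ?expand_AM.
zmod_eq_from coc.
Qed.

Lemma cext_nijenhuis : is_nijenhuis_algebra cext_mul cext_N.
Proof.
split; [exact: cext_mul_bilin | exact: cext_mulA | exact: cext_N_lin |
        exact: cext_N_nijenhuis].
Qed.

Lemma cext_i_lin : linear cext_i.
Proof. by move=> k u v; congr (_, _); rewrite /= scaler0 addr0. Qed.

Lemma cext_i_mul u v : cext_i 0 = cext_mul (cext_i u) (cext_i v).
Proof. by rewrite /cext_mul /= ?expand_AM !addr0. Qed.

Lemma cext_i_N u : cext_i (NM u) = cext_N (cext_i u).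
Proof. by rewrite /cext_N /= ?expand_AM add0r. Qed.

Lemma cext_p_lin : linear cext_p. Proof. by []. Qed.
Lemma cext_p_mul x y : cext_p (cext_mul x y) = mul (cext_p x) (cext_p y). Proof. by []. Qed.
Lemma cext_p_N x : cext_p (cext_N x) = N (cext_p x). Proof. by []. Qed.
Lemma cext_i_inj : injective cext_i. Proof. by move=> u v []. Qed.
Lemma cext_p_surj a : exists x, cext_p x = a. Proof. by exists (a, 0). Qed.

Lemma cext_exact x : cext_p x = 0 <-> exists u, x = cext_i u.
Proof. by split=> [|[u ->] //]; case: x => a u /= ->; exists u. Qed.

Lemma cext_induced (s : A -> A * M) : linear s -> cancel s cext_p ->
  forall a u, cext_mul (s a) (cext_i u) = cext_i (lact a u) /\
              cext_mul (cext_i u) (s a) = cext_i (ract u a).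
Proof.
move=> _ s_can a u; rewrite /cext_mul /cext_i /= -[(s a).1]/(cext_p (s a)) s_can.
by split; congr (_, _); rewrite ?expand_AM ?add0r ?addr0.
Qed.

Definition cocycle_extension : extension :=
  AbExt cext_nijenhuis cext_i_lin cext_i_mul cext_i_N cext_p_lin cext_p_mul cext_p_N
    cext_i_inj cext_p_surj cext_exact cext_induced.

Definition cext_sec (a : A) : A * M := (a, 0).

Lemma cext_sec_lin : linear cext_sec.
Proof. by move=> k a b; congr (_, _); rewrite /= scaler0 addr0. Qed.

Lemma cext_sec_can : cancel cext_sec cext_p. Proof. by []. Qed.

Lemma mpart_cext (x : A * M) : mpart (E:=cocycle_extension) cext_sec_can x = x.2.
Proof.
by have /(congr1 snd) := mpartE (E:=cocycle_extension) cext_sec_can x; rewrite /= subr0.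
Qed.

Lemma sec_cocycle_cext : sec_cocycle (E:=cocycle_extension) cext_sec_lin cext_sec_can = c.
Proof.
apply: cocycle2_eq; rewrite /= /sec_chi /sec_F /=.
  by apply/funext => a; apply/funext => b; rewrite mpart_cext /= ?expand_AM !addr0.
by apply/funext => a; rewrite mpart_cext /= ?expand_AM addr0.
Qed.

End CocycleExtension.

Definition ext_section (E : extension) :=
  cid (linear_section_exists (ext_pr_lin E) (ext_pr_surj E)).
Definition ext_sec E : A -> ext_E E := sval (ext_section E).
Lemma ext_sec_lin E : linear (ext_sec E). Proof. exact: (svalP (ext_section E)).1. Qed.
Lemma ext_sec_can E : cancel (ext_sec E) (ext_pr E).
Proof. exact: (svalP (ext_section E)).2. Qed.

Definition ext_cocycle (E : extension) : cocycle :=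
  sec_cocycle (ext_sec_lin E) (ext_sec_can E).

Lemma ext_iso_cohomologous E E' :
  ext_iso E E' <-> cohomologous (ext_cocycle E) (ext_cocycle E').
Proof.
rewrite /ext_cocycle.
move: (ext_sec_lin E) (ext_sec_can E) (ext_sec_lin E') (ext_sec_can E').
move: (ext_sec E) (ext_sec E') => s s' s_lin s_can s'_lin s'_can; split.
  case=> phi [[phi_lin _] [phi_mul phi_N phi_i phi_p]].
  rewrite -(sec_cocycle_iso phi_lin phi_mul phi_N phi_i phi_p s_lin s_can).
  exact: sec_cocycle_change.
case=> f [f_lin chi_f F_f].
apply: (@ext_iso_of_sec_cocycle_eq _ _ _ _ s_lin s_can
  (shift_sec_lin s'_lin f_lin) (shift_sec_can s'_can f)).
apply: cocycle2_eq => /=; apply/funext => a; first apply/funext => b.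
  by move: (chi_f a b) => /= chi_eq; rewrite (sec_chi_shift s'_lin); zmod_eq_from chi_eq.
by move: (F_f a) => /= F_eq; rewrite (sec_F_shift s'_lin); zmod_eq_from F_eq.
Qed.

Lemma ext_cocycle_surj c : exists E, cohomologous (ext_cocycle E) c.
Proof.
exists (cocycle_extension c).
have := @sec_cocycle_change (cocycle_extension c) _ _ cext_sec_lin cext_sec_can
  (ext_sec_lin _) (ext_sec_can _).
by rewrite sec_cocycle_cext.
Qed.

End NijenhuisExtensions.

Theorem theorem4p3 (K : fieldType) (charK0 : [pchar K] =i pred0)
  (A : lmodType K) (mul : A -> A -> A) (N : A -> A)
  (M : lmodType K) (lact : A -> M -> M) (ract : M -> A -> M) (NM : M -> M)
  (HA : is_nijenhuis_algebra mul N)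
  (HM : is_nijenhuis_bimodule mul N lact ract NM) :
  exists Phi : abelian_extension mul N lact ract NM ->
               cocycle2 mul N lact ract NM,
    (forall E E', ext_iso E E' <-> cohomologous (Phi E) (Phi E')) /\
    (forall c, exists E, cohomologous (Phi E) c).
Proof.
exists (ext_cocycle HM); split.
- exact: ext_iso_cohomologous HM.
- exact: ext_cocycle_surj HA HM.
Qed.
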